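(* Assume the Axiom of Choice. Let $A$ be a $\boldsymbol{\mathit{ba}\ell}$-algebra, $X$ the set of proper archimedean $\ell$-ideals of $A$ ordered by inclusion with the Alexandroff topology, and $Y_A\subseteq X$ the set of maximal $\ell$-ideals of $A$. Then the restriction map $\psi:N(X)\to B(Y_A)$, $\psi(f)=f|_{Y_A}$, is a $\boldsymbol{\mathit{ba}\ell}$-isomorphism.
   Context: A $\boldsymbol{\mathit{ba}\ell}$-algebra is a commutative unital lattice-ordered algebra $A$ over $\mathbb R$ that is bounded (for every $a\in A$ there is an integer $n\ge1$ with $a\le n\cdot1$) and archimedean (if $na\le b$ for all $n\ge1$ then $a\le0$). An $\ell$-ideal is a ring ideal $I$ with $|a|\le|b|$, $b\in I\Rightarrow a\in I$; it is archimedean if $A/I$ is archimedean; every maximal $\ell$-ideal is archimedean. The Alexandroff topology on a poset has the upsets as open sets. For a space $X$, $B(X)$ is the $\boldsymbol{\mathit{ba}\ell}$-algebra of bounded real functions with pointwise operations, $f_*(x)=\sup\{\inf f[U]\mid U\text{ open}\ni x\}$, $f^*(x)=\inf\{\sup f[U]\mid U\text{ open}\ni x\}$, $f^\#=(f^* )_*$, and $N(X)=\{f\in B(X)\mid f=f^\#\}$, a Dedekind complete $\boldsymbol{\mathit{ba}\ell}$-algebra whose operations are the normalizations $(\cdot)^\#$ of pointwise operations. *)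

(* The reals are an arbitrary
   [R : realType] (every realType is a model of the complete archimedean
   ordered field R).  Classical axioms (choice) are available via boolp. *)
From HB Require Import structures.
From mathcomp Require Import all_boot all_order all_algebra.
From mathcomp Require Import all_classical all_reals.
Set Implicit Arguments. Unset Strict Implicit. Unset Printing Implicit Defensive.
Import Order.TTheory GRing.Theory Num.Theory.
Local Open Scope classical_set_scope.
Local Open Scope ring_scope.

Section BalAlgebra.
Variables (R : realType) (A : comAlgType R).
Variables (le : A -> A -> Prop) (join meet : A -> A -> A).

(* (A, le, join, meet) is a bounded archimedean commutative unital
   lattice-ordered R-algebra: [join]/[meet] are the binary sup/inf of the
   partial order [le]. *)
Record is_bal : Prop := {
  bal_refl : forall a, le a a;
  bal_trans : forall a b c, le a b -> le b c -> le a c;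
  bal_anti : forall a b, le a b -> le b a -> a = b;
  bal_join_l : forall a b, le a (join a b);
  bal_join_r : forall a b, le b (join a b);
  bal_join_lub : forall a b c, le a c -> le b c -> le (join a b) c;
  bal_meet_l : forall a b, le (meet a b) a;
  bal_meet_r : forall a b, le (meet a b) b;
  bal_meet_glb : forall a b c, le c a -> le c b -> le c (meet a b);
  bal_add : forall a b c, le a b -> le (a + c) (b + c);
  bal_scale : forall (r : R) a b, 0 <= r -> le a b -> le (r *: a) (r *: b);
  bal_mul : forall a b, le 0 a -> le 0 b -> le 0 (a * b);
  bal_bounded : forall a, exists n : nat, (1 <= n)%N /\ le a (1 *+ n);
  bal_archi : forall a b, (forall n : nat, (1 <= n)%N -> le (a *+ n) b) -> le a 0
}.

Definition labs (a : A) : A := join a (- a).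
Definition lpos (a : A) : A := join a 0.

Definition lideal (I : set A) : Prop :=
  [/\ I 0,
      (forall a b, I a -> I b -> I (a - b)),
      (forall a c, I a -> I (c * a)) &
      (forall a b, le (labs a) (labs b) -> I b -> I a)].

Definition proper (I : set A) : Prop := I <> setT.

(* The order of the quotient l-algebra A/I (I an l-ideal):
   a + I <= b + I  iff  (a - b)^+ belongs to I. *)
Definition quot_le (I : set A) (a b : A) : Prop := I (lpos (a - b)).

Definition archimedean_lideal (I : set A) : Prop :=
  lideal I /\
  forall a b, (forall n : nat, (1 <= n)%N -> quot_le I (a *+ n) b) -> quot_le I a 0.

Definition maximal_lideal (I : set A) : Prop :=
  [/\ lideal I, proper I &
      forall J, lideal J -> proper J -> I `<=` J -> J = I].

Definition Xsp := {I : set A | archimedean_lideal I /\ proper I}.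

Definition alex_open (U : set Xsp) : Prop :=
  forall x y : Xsp, U x -> proj1_sig x `<=` proj1_sig y -> U y.

Definition Ysp := {x : Xsp | maximal_lideal (proj1_sig x)}.

End BalAlgebra.

Section Normal.
Variables (R : realType) (T : Type) (isopen : set T -> Prop).

Definition bounded_fun (f : T -> R) : Prop := exists M : R, forall x, `|f x| <= M.

Definition lower_env (f : T -> R) (x : T) : R :=
  sup [set inf (f @` U) | U in [set U | isopen U /\ U x]].

Definition upper_env (f : T -> R) (x : T) : R :=
  inf [set sup (f @` U) | U in [set U | isopen U /\ U x]].

Definition normalize (f : T -> R) : T -> R := lower_env (upper_env f).

Definition normal_fun (f : T -> R) : Prop := bounded_fun f /\ normalize f = f.

End Normal.

Definition restrict_psi (R : realType) (A : comAlgType R)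
  (le : A -> A -> Prop) (join meet : A -> A -> A)
  (f : Xsp le join -> R) : Ysp le join -> R :=
  fun y => f (proj1_sig y).

(* The proof separates order theory from algebra.
   1. In a preordered set T with its Alexandroff topology (opens = up-sets),
      the smallest open neighbourhood of x is its up-set, so for bounded f
      the envelopes are f^*(x) = sup f[up x] and f_*(x) = inf f[up x].
   2. Let Y be a set of maximal points of T such that every point lies below
      some point of Y.  Then for bounded f,
         f^#(x) = inf { f(m) | m in Y, x <= m },
      so f^# only depends on the restriction f|_Y, f^# agrees with f on Y,
      and every bounded h on Y extends to the normal function
      x |-> inf { h(m) | m in Y, x <= m }.  Hence restriction is a bijection
      from N(T) onto B(Y) commuting with the normalized operations.
   3. For a ba-l-algebra A, the maximal l-ideals are archimedean (if a^+ were
      outside a maximal M, the l-ideal generated by M and a^+ would contain 1,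
      which the archimedean hypothesis forbids), and every proper l-ideal is
      contained in a maximal one (Zorn).  So T := X and Y := Y_A satisfy 2. *)
From Pilot Require Import Defs.
From HB Require Import structures.
From mathcomp Require Import all_boot all_order all_algebra.
From mathcomp Require Import all_classical all_reals.
From mathcomp Require Import ring.
Import Order.TTheory GRing.Theory Num.Theory.
Local Open Scope classical_set_scope.
Local Open Scope ring_scope.
Set Implicit Arguments.
Unset Strict Implicit.

Section BoundedFunctions.
Variables (R : realType) (T : Type).

Lemma bounded_cst (r : R) : bounded_fun (fun _ : T => r).
Proof. by exists `|r|. Qed.

Lemma bounded_mul (f g : T -> R) :
  bounded_fun f -> bounded_fun g -> bounded_fun (fun x => f x * g x).
Proof.
move=> [M fM] [N gN]; exists (M * N) => x.
by rewrite normrM ler_pM.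
Qed.

Lemma bounded_op2 (op : R -> R -> R) (f g : T -> R) :
  (forall a b, `|op a b| <= `|a| + `|b|) ->
  bounded_fun f -> bounded_fun g -> bounded_fun (fun x => op (f x) (g x)).
Proof.
move=> opD [M fM] [N gN]; exists (M + N) => x.
by apply: le_trans (opD _ _) _; apply: lerD.
Qed.

Lemma bounded_add (f g : T -> R) :
  bounded_fun f -> bounded_fun g -> bounded_fun (f \+ g).
Proof. by move=> fb gb; exact (bounded_op2 (@ler_normD R R) fb gb). Qed.

Lemma bounded_image_lbound (f : T -> R) (U : set T) :
  bounded_fun f -> has_lbound (f @` U).
Proof.
move=> [M fM]; exists (- M) => _ [x _ <-].
by have /andP[] : - M <= f x <= M by rewrite -ler_norml.
Qed.

Lemma bounded_image_ubound (f : T -> R) (U : set T) :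
  bounded_fun f -> has_ubound (f @` U).
Proof.
move=> [M fM]; exists M => _ [x _ <-].
by have /andP[] : - M <= f x <= M by rewrite -ler_norml.
Qed.

End BoundedFunctions.

Lemma normD_max (R : realType) (a b : R) : `|Order.max a b| <= `|a| + `|b|.
Proof. by rewrite /Order.max; case: ifP => _; rewrite ?lerDr ?lerDl. Qed.

Lemma normD_min (R : realType) (a b : R) : `|Order.min a b| <= `|a| + `|b|.
Proof. by rewrite /Order.min; case: ifP => _; rewrite ?lerDr ?lerDl. Qed.

Section Extrema.
Variable R : realType.

Lemma sup_greatest (S : set R) s : S s -> ubound S s -> sup S = s.
Proof.
move=> Ss ubs; apply/le_anti/andP; split; first by apply: ge_sup ubs; exists s.
by apply: ub_le_sup Ss; exists s.
Qed.

Lemma inf_least (S : set R) s : S s -> lbound S s -> inf S = s.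
Proof.
move=> Ss lbs; apply/le_anti/andP; split; last by apply: lb_le_inf lbs; exists s.
by apply: ge_inf Ss; exists s.
Qed.

End Extrema.

Section Alexandroff.
Variables (R : realType) (T : Type) (sub : T -> T -> Prop).
Hypotheses (sub_refl : forall x, sub x x)
  (sub_trans : forall x y z, sub x y -> sub y z -> sub x z).

Definition upset_open (U : set T) : Prop := forall x y, U x -> sub x y -> U y.

Definition upset (x : T) : set T := [set y | sub x y].

Lemma upset_nbhs x : upset_open (upset x) /\ upset x x.
Proof. by split=> [y z xy yz|]; [exact: sub_trans xy yz | exact: sub_refl]. Qed.

Lemma open_upset_sub U x : upset_open U -> U x -> upset x `<=` U.
Proof. by move=> oU Ux y; apply: oU. Qed.

(* The up-set of x is its least open neighbourhood, so the envelopes of a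
   bounded f are computed on it. *)
Lemma lower_env_upset (f : T -> R) x :
  bounded_fun f -> lower_env upset_open f x = inf (f @` upset x).
Proof.
move=> fb; apply: sup_greatest; first by exists (upset x); first exact: upset_nbhs.
move=> _ [U [oU Ux] <-]; apply: lb_le_inf; first by exists (f x), x.
move=> _ [y xy <-]; apply: ge_inf; first exact: bounded_image_lbound.
by exists y => //; apply: open_upset_sub oU Ux _ xy.
Qed.

Lemma upper_env_upset (f : T -> R) x :
  bounded_fun f -> upper_env upset_open f x = sup (f @` upset x).
Proof.
move=> fb; apply: inf_least; first by exists (upset x); first exact: upset_nbhs.
move=> _ [U [oU Ux] <-]; apply: ge_sup; first by exists (f x), x.
move=> _ [y xy <-]; apply: ub_le_sup; first exact: bounded_image_ubound.
by exists y => //; apply: open_upset_sub oU Ux _ xy.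
Qed.

Lemma upper_env_bound (f : T -> R) M :
  (forall x, `|f x| <= M) -> forall x, `|upper_env upset_open f x| <= M.
Proof.
move=> fM x; have fb : bounded_fun f by exists M.
have fbd y : - M <= f y <= M by rewrite -ler_norml.
rewrite upper_env_upset // ler_norml; apply/andP; split.
  apply: le_trans (ub_le_sup (bounded_image_ubound _ fb) _); last by exists x.
  by case/andP: (fbd x).
by apply: ge_sup; [exists (f x), x | move=> _ [y _ <-]; case/andP: (fbd y)].
Qed.

Lemma upper_env_bounded (f : T -> R) :
  bounded_fun f -> bounded_fun (upper_env upset_open f).
Proof. by move=> [M fM]; exists M; apply: upper_env_bound. Qed.

Section MaximalPoints.
Variable Y : T -> Prop.
Hypotheses (Y_maximal : forall m z, Y m -> sub m z -> z = m)
  (Y_cofinal : forall x, exists m, Y m /\ sub x m).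

Definition restrY (f : T -> R) : {m | Y m} -> R := fun m => f (sval m).

Lemma restrY_bounded (f : T -> R) : bounded_fun f -> bounded_fun (restrY f).
Proof. by move=> [M fM]; exists M => m; apply: fM. Qed.

Definition maxinf (h : {m | Y m} -> R) (x : T) : R :=
  inf [set h m | m in [set m : {m | Y m} | sub x (sval m)]].

Lemma upset_maximal m : Y m -> upset m = [set m].
Proof.
move=> Ym; apply/seteqP; split=> [z mz|_ ->]; first exact: Y_maximal.
exact: sub_refl.
Qed.

Lemma upper_env_maximal (f : T -> R) m :
  bounded_fun f -> Y m -> upper_env upset_open f m = f m.
Proof. by move=> fb Ym; rewrite upper_env_upset // upset_maximal // image_set1 sup1. Qed.

Lemma upper_env_ge_maximal (f : T -> R) y m :
  bounded_fun f -> Y m -> sub y m -> f m <= upper_env upset_open f y.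
Proof.
move=> fb Ym ym; rewrite upper_env_upset //.
by apply: ub_le_sup; [exact: bounded_image_ubound | exists m].
Qed.

Lemma maxinf_nonempty (h : {m | Y m} -> R) x :
  [set h m | m in [set m : {m | Y m} | sub x (sval m)]] !=set0.
Proof. by have [m [Ym xm]] := Y_cofinal x; exists (h (exist _ m Ym)), (exist _ m Ym). Qed.

Lemma normalize_maxinf (f : T -> R) :
  bounded_fun f -> normalize upset_open f = maxinf (restrY f).
Proof.
move=> fb; apply/funext => x; rewrite /normalize.
rewrite lower_env_upset; last exact: upper_env_bounded.
set g := upper_env upset_open f.
apply/le_anti/andP; split.
  apply: lb_le_inf; first exact: maxinf_nonempty.
  move=> _ [[m Ym] /= xm <-]; rewrite /restrY /= -(upper_env_maximal fb Ym).
  by apply: ge_inf; [exact/bounded_image_lbound/upper_env_bounded | exists m].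
apply: lb_le_inf; first by exists (g x), x => //; apply: sub_refl.
move=> _ [y xy <-]; have [m [Ym ym]] := Y_cofinal y.
apply: le_trans _ (upper_env_ge_maximal fb Ym ym).
apply: (ge_inf (bounded_image_lbound _ (restrY_bounded fb))).
by exists (exist _ m Ym) => //=; apply: sub_trans ym.
Qed.

Lemma restrY_maxinf (h : {m | Y m} -> R) : restrY (maxinf h) = h.
Proof.
apply/funext => -[m Ym]; rewrite /restrY /maxinf /=.
rewrite -[RHS](inf1 (h (exist _ m Ym))); congr inf.
apply/seteqP; split=> [_ [[z Yz] /= mz <-]|_ ->]; last by exists (exist _ m Ym) => //=; apply: sub_refl.
have zm := Y_maximal Ym mz; subst z.
by rewrite (Prop_irrelevance Yz Ym).
Qed.

Lemma maxinf_bounded (h : {m | Y m} -> R) : bounded_fun h -> bounded_fun (maxinf h).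
Proof.
move=> hb; have [M hM] := hb; exists M => x; rewrite ler_norml.
have [m [Ym xm]] := Y_cofinal x.
have hbd n : - M <= h n <= M by rewrite -ler_norml.
apply/andP; split.
  by apply: lb_le_inf; [exact: maxinf_nonempty | move=> _ [n _ <-]; case/andP: (hbd n)].
apply: le_trans (_ : h (exist _ m Ym) <= M); last by case/andP: (hbd (exist _ m Ym)).
by apply: ge_inf; [exact: bounded_image_lbound | exists (exist _ m Ym)].
Qed.

Lemma restrY_normalize (f : T -> R) :
  bounded_fun f -> restrY (normalize upset_open f) = restrY f.
Proof. by move=> fb; rewrite normalize_maxinf // restrY_maxinf. Qed.

Lemma normal_maxinf (f : T -> R) :
  normal_fun upset_open f -> f = maxinf (restrY f).
Proof. by move=> [fb nf]; rewrite -{1}nf normalize_maxinf. Qed.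

Lemma maxinf_normal (h : {m | Y m} -> R) :
  bounded_fun h -> normal_fun upset_open (maxinf h).
Proof.
move=> hb; have mb := maxinf_bounded hb.
by split=> //; rewrite normalize_maxinf // restrY_maxinf.
Qed.

End MaximalPoints.
End Alexandroff.

Section BalAlgebra.
Variables (R : realType) (A : comAlgType R).
Variables (le : A -> A -> Prop) (join meet : A -> A -> A).
Hypothesis bal : is_bal le join meet.

Lemma bal_le_trans b a c : le a b -> le b c -> le a c.
Proof. exact: (bal_trans bal). Qed.

Local Notation lab := (labs join).

Lemma bal_add2 a b c d : le a b -> le c d -> le (a + c) (b + d).
Proof.
move=> ab cd; apply: (bal_le_trans (bal_add bal c ab) _).
by rewrite ![b + _]addrC; apply: (bal_add bal).
Qed.

Lemma bal_addr_cancel a b c : le (a + c) (b + c) -> le a b.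
Proof. by move=> h; have := bal_add bal (- c) h; rewrite !addrK. Qed.

Lemma bal_subr_ge0 a b : le 0 (b - a) <-> le a b.
Proof.
split=> h; first by have := bal_add bal a h; rewrite add0r subrK.
by have := bal_add bal (- a) h; rewrite subrr.
Qed.

Lemma bal_addr_ge0 a b : le 0 a -> le 0 b -> le 0 (a + b).
Proof. by move=> a0 b0; have := bal_add2 a0 b0; rewrite addr0. Qed.

Lemma bal_muln a b n : le a b -> le (a *+ n) (b *+ n).
Proof.
move=> ab; elim: n => [|n IH]; first by rewrite !mulr0n; apply: (bal_refl bal).
by rewrite !mulrS; apply: bal_add2.
Qed.

Lemma bal_mulnK a b n : le (a *+ n.+1) (b *+ n.+1) -> le a b.
Proof.
have natK (x : A) : (n.+1%:R : R)^-1 *: (x *+ n.+1) = x.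
  by rewrite -scaler_nat scalerA mulVf ?scale1r // pnatr_eq0.
have inv_ge0 : 0 <= (n.+1%:R : R)^-1 by rewrite invr_ge0 ler0n.
by move=> h; have := bal_scale bal inv_ge0 h; rewrite !natK.
Qed.

(* 0 <= 1 follows from boundedness: 0 <= n.1 for some n >= 1. *)
Lemma bal_ge0_1 : le 0 1.
Proof.
have [[|n] [// _ h]] := bal_bounded bal 0.
by apply: (@bal_mulnK _ _ n); rewrite mul0rn.
Qed.

Lemma bal_ge0_n n : le 0 (1 *+ n).
Proof. by have := bal_muln n bal_ge0_1; rewrite mul0rn. Qed.

Lemma bal_lpos_muln a z n :
  le 0 z -> (0 < n)%N -> le (a *+ n) z -> le (lpos join a *+ n) z.
Proof.
case: n => // n z0 _ az; pose w := (n.+1%:R : R)^-1 *: z.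
have wK : w *+ n.+1 = z.
  by rewrite /w -scaler_nat scalerA mulfV ?scale1r // pnatr_eq0.
have aw : le (join a 0) w.
  by apply: (bal_join_lub bal); apply: (@bal_mulnK _ _ n); rewrite wK ?mul0rn.
by rewrite -wK; apply: bal_muln.
Qed.

Lemma labs_lub a c : le a c -> le (- a) c -> le (lab a) c.
Proof. exact: (bal_join_lub bal). Qed.

Lemma labs_ge0 a : le 0 (lab a).
Proof.
apply: (@bal_mulnK _ _ 1); rewrite mul0rn mulr2n.
by have := bal_add2 (bal_join_l bal a (- a)) (bal_join_r bal a (- a)); rewrite subrr.
Qed.

Lemma labs_id a : le 0 a -> lab a = a.
Proof.
move=> a0; apply: (bal_anti bal); last exact: (bal_join_l bal).
apply: labs_lub; first exact: (bal_refl bal).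
by apply: (bal_le_trans _ a0); apply/bal_subr_ge0; rewrite sub0r opprK.
Qed.

Lemma labs_sub a b : le (lab (a - b)) (lab a + lab b).
Proof.
apply: labs_lub; first exact: bal_add2 (bal_join_l bal _ _) (bal_join_r bal _ _).
by rewrite opprB addrC; apply: bal_add2 (bal_join_r bal _ _) (bal_join_l bal _ _).
Qed.

(* |c a| <= K |a| whenever |c| <= K, because
   2 (K|a| -+ c a) = (K -+ c)(|a| + a) + (K +- c)(|a| - a) is a sum of
   products of positive elements. *)
Lemma labs_mul_le c a K : le (lab c) (1 *+ K) -> le (lab (c * a)) (lab a *+ K).
Proof.
move=> cK; set u := lab a.
have Kc_ge0 : le 0 (1 *+ K - c).
  by apply/bal_subr_ge0/(bal_le_trans (bal_join_l bal c (- c)) cK).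
have Kc'_ge0 : le 0 (1 *+ K + c).
  by rewrite -(opprK c); apply/bal_subr_ge0/(bal_le_trans (bal_join_r bal c (- c)) cK).
have ua_ge0 : le 0 (u - a) by apply/bal_subr_ge0/(bal_join_l bal).
have ua'_ge0 : le 0 (u + a) by rewrite -(opprK a); apply/bal_subr_ge0/(bal_join_r bal).
apply: labs_lub; apply/bal_subr_ge0/(@bal_mulnK _ _ 1); rewrite mul0rn.
- have -> : (u *+ K - c * a) *+ 2 = (1 *+ K - c) * (u + a) + (1 *+ K + c) * (u - a).
    by ring.
  by apply: bal_addr_ge0; apply: (bal_mul bal).
- have -> : (u *+ K - - (c * a)) *+ 2 = (1 *+ K + c) * (u + a) + (1 *+ K - c) * (u - a).
    by ring.
  by apply: bal_addr_ge0; apply: (bal_mul bal).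
Qed.

Section Lideal.
Variable I : set A.
Hypothesis HI : lideal le join I.

Lemma lideal0 : I 0. Proof. by case: HI. Qed.
Lemma lidealB a b : I a -> I b -> I (a - b). Proof. by case: HI => _ h _ _; apply: h. Qed.
Lemma lidealM a c : I a -> I (c * a). Proof. by case: HI => _ _ h _; apply: h. Qed.
Lemma lideal_solid a b : le (lab a) (lab b) -> I b -> I a.
Proof. by case: HI => _ _ _ h; apply: h. Qed.

Lemma lidealD a b : I a -> I b -> I (a + b).
Proof.
move=> Ia Ib; rewrite -[b]opprK -[- b]sub0r.
by apply: lidealB => //; apply: lidealB => //; apply: lideal0.
Qed.

Lemma lidealMn a n : I a -> I (a *+ n).
Proof. by move=> Ia; rewrite -mulr_natl; apply: lidealM. Qed.

Lemma lideal_abs a : I a -> I (lab a).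
Proof. by apply: lideal_solid; rewrite (labs_id (labs_ge0 a)); apply: (bal_refl bal). Qed.

Lemma lideal_le a b : le 0 a -> le a b -> I b -> I a.
Proof.
move=> a0 ab; apply: lideal_solid; rewrite labs_id //.
exact: (bal_le_trans ab (bal_join_l bal _ _)).
Qed.

Lemma lideal_proper : Defs.proper I <-> ~ I 1.
Proof.
split=> [pI I1|nI1 IT]; last by apply: nI1; rewrite IT.
by apply: pI; apply/seteqP; split=> // c _; rewrite -(mulr1 c); apply: lidealM.
Qed.

End Lideal.

(* The l-ideal generated by M and c. *)
Definition adjoin (M : set A) (c : A) : set A :=
  [set x | exists m k, M m /\ le (lab x) (m + c *+ k)].

Lemma lideal_adjoin M c : lideal le join M -> lideal le join (adjoin M c).
Proof.
move=> HM; split.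
- exists 0, 0%N; split; first exact: lideal0.
  by rewrite labs_id ?addr0 ?mulr0n; apply: (bal_refl bal).
- move=> x y [m1 [k1 [M1 h1]]] [m2 [k2 [M2 h2]]].
  exists (m1 + m2), (k1 + k2)%N; split; first exact: lidealD.
  by apply: (bal_le_trans (labs_sub x y) _); rewrite mulrnDr addrACA; apply: bal_add2.
- move=> x e [m [k [Mm h]]]; have [K [_ eK]] := bal_bounded bal (lab e).
  exists (m *+ K), (k * K)%N; split; first exact: lidealMn.
  apply: (bal_le_trans (labs_mul_le x eK) _).
  by rewrite mulrnA -mulrnDl; apply: bal_muln.
- by move=> x y xy [m [k [Mm h]]]; exists m, k; split=> //; exact: (bal_le_trans xy h).
Qed.

Lemma adjoin_sub M c : lideal le join M -> M `<=` adjoin M c.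
Proof.
move=> HM x Mx; exists (lab x), 0%N; split; first exact: lideal_abs.
by rewrite mulr0n addr0; apply: (bal_refl bal).
Qed.

Lemma adjoin_mem M c : lideal le join M -> le 0 c -> adjoin M c c.
Proof.
move=> HM c0; exists 0, 1%N; split; first exact: lideal0.
by rewrite labs_id // add0r; apply: (bal_refl bal).
Qed.

Lemma maximal_adjoin_one M c : maximal_lideal le join M -> le 0 c -> ~ M c ->
  exists m k, M m /\ le 1 (m + c *+ k.+1).
Proof.
case=> HM pM maxM c0 Mc.
have HJ := lideal_adjoin c HM.
have [m [k [Mm h]]] : adjoin M c 1.
  apply: contrapT => /(lideal_proper HJ) pJ; apply: Mc.
  by rewrite -(maxM _ HJ pJ (adjoin_sub c HM)); apply: adjoin_mem.
exists m, k; split=> //; rewrite labs_id in h; last exact: bal_ge0_1.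
apply: (bal_le_trans h _); rewrite mulrS addrCA; apply/bal_subr_ge0.
by rewrite addrK.
Qed.

(* If p_n := (n a - b)^+ lies in M for all
   n >= 1 but c := a^+ does not, then 1 <= m + (k+1) c with m in M.  With
   b <= N and n := (k+1)(N+1) we get n c <= p_n + N, hence
   N + 1 <= (N+1) m + p_n + N, so 1 <= (N+1) m + p_n lies in M: absurd. *)
Lemma maximal_archimedean M :
  maximal_lideal le join M -> archimedean_lideal le join M.
Proof.
move=> maxM; have [HM pM _] := maxM; split=> // a b hn.
rewrite /quot_le subr0; set c := lpos join a.
apply: contrapT => Mc.
have [m [k [Mm one_le]]] := maximal_adjoin_one maxM (bal_join_r bal a 0) Mc.
have [N [_ bN]] := bal_bounded bal b.
pose n := (k.+1 * N.+1)%N; set p := lpos join (a *+ n - b).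
have Mp : M p by apply: hn; rewrite muln_gt0.
have nc : le (c *+ n) (p + 1 *+ N).
  apply: bal_lpos_muln; [|by rewrite muln_gt0|].
    by apply: bal_addr_ge0; [apply: (bal_join_r bal) | apply: bal_ge0_n].
  by rewrite -(subrK b (a *+ n)); apply: bal_add2 => //; apply: (bal_join_l bal).
have Nle : le (1 *+ N.+1) (m *+ N.+1 + (p + 1 *+ N)).
  apply: (bal_le_trans (bal_muln N.+1 one_le) _).
  by rewrite mulrnDl -mulrnA ![m *+ _ + _]addrC; apply: (bal_add bal).
rewrite [1 *+ N.+1]mulrS addrA in Nle; apply: ((lideal_proper HM).1 pM).
apply: (lideal_le HM bal_ge0_1 (bal_addr_cancel Nle)).
by apply: lidealD => //; apply: lidealMn.
Qed.

Lemma lideal_bigcup_chain (F : set (set A)) : F !=set0 -> total_on F subset ->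
  (forall I, F I -> lideal le join I /\ ~ I 1) ->
  lideal le join (\bigcup_(I in F) I) /\ ~ (\bigcup_(I in F) I) 1.
Proof.
move=> [I0 FI0] Ftot Fgood.
have common a b : (\bigcup_(I in F) I) a -> (\bigcup_(I in F) I) b ->
    exists I, [/\ F I, I a & I b].
  move=> [I FI Ia] [J FJ Jb]; have [IJ|JI] := Ftot _ _ FI FJ.
    by exists J; split=> //; apply: IJ.
  by exists I; split=> //; apply: JI.
split; last by move=> [I FI I1]; apply: (Fgood _ FI).2.
split.
- by exists I0 => //; exact: (lideal0 (Fgood _ FI0).1).
- move=> a b Ua Ub; have [I [FI Ia Ib]] := common _ _ Ua Ub.
  by exists I => //; exact: (lidealB (Fgood _ FI).1).
- by move=> a c [I FI Ia]; exists I => //; exact: (lidealM (Fgood _ FI).1).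
- by move=> a b ab [I FI Ib]; exists I => //; exact: (lideal_solid (Fgood _ FI).1 ab).
Qed.

(* Krull's lemma for l-ideals, via Zorn's lemma on the l-ideals omitting 1
   and containing x; a chain is bounded by the union of its members and x,
   which is again a (nonempty) chain. *)
Lemma exists_maximal_lideal (x : set A) : lideal le join x -> Defs.proper x ->
  exists M, maximal_lideal le join M /\ x `<=` M.
Proof.
move=> Hx px; pose good I := [/\ lideal le join I, ~ I 1 & x `<=` I].
pose T := {I : set A | good I}.
have [||||[M [HM M1 xM]] Mmax] := @Zorn T (fun I J => `[< sval I `<=` sval J >]).
- by move=> I; apply/asboolP.
- by move=> I J K /asboolP IJ /asboolP JK; apply/asboolP; apply: subset_trans JK.
- by move=> [I ?] [J ?] /asboolP IJ /asboolP JI; apply/eq_exist/seteqP.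
- move=> C Ctot; pose F := [set sval I | I in C] `|` [set x].
  have Fgood I : F I -> lideal le join I /\ ~ I 1.
    case=> [[J _ <-]|->]; last by split=> //; apply/(lideal_proper Hx).
    by case: (svalP J).
  have Fx I : F I -> x `<=` I by case=> [[J _ <-]|->] //; case: (svalP J).
  have Ftot : total_on F subset.
    move=> _ _ [[I CI <-]|->] [[J CJ <-]|->].
    - by case: (Ctot _ _ CI CJ) => /asboolP; [left | right].
    - by right; apply: Fx; left; exists I.
    - by left; apply: Fx; left; exists J.
    - by left.
  have [HU U1] := lideal_bigcup_chain (ex_intro _ x (or_intror erefl)) Ftot Fgood.
  have xU : x `<=` \bigcup_(I in F) I by move=> a xa; exists x => //; right.
  exists (exist good _ (And3 HU U1 xU)) => I CI; apply/asboolP => a Ia.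
  by exists (sval I) => //; left; exists I.
- exists M; split=> //; split=> [//||J HJ pJ MJ]; first exact/(lideal_proper HM).
  have xJ : x `<=` J by apply: subset_trans MJ.
  have good_J : good J by split=> //; apply/(lideal_proper HJ).
  by have /(congr1 sval) := Mmax (exist good J good_J) (asboolT MJ).
Qed.

Lemma maximal_point_eq (m z : Xsp le join) :
  maximal_lideal le join (sval m) -> sval m `<=` sval z -> z = m.
Proof.
case: m z => [M pM] [Z pZ] [_ _ maxM] /= MZ.
have [[HZ _] properZ] := pZ.
have ZM := maxM Z HZ properZ MZ; subst Z; congr exist; exact: Prop_irrelevance.
Qed.

Lemma maximal_point_above (x : Xsp le join) :
  exists m : Xsp le join, maximal_lideal le join (sval m) /\ sval x `<=` sval m.
Proof.
have [[Hx _] px] := svalP x.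
have [M [maxM xM]] := exists_maximal_lideal Hx px.
have pM : Defs.proper M by case: maxM.
by exists (exist _ M (conj (maximal_archimedean maxM) pM)).
Qed.

End BalAlgebra.

Theorem mainTheorem13 (R : realType) (A : comAlgType R)
  (le : A -> A -> Prop) (join meet : A -> A -> A) :
  is_bal le join meet ->
  let N := normal_fun (@alex_open R A le join) in
  let nz := normalize (@alex_open R A le join) in
  let psi := @restrict_psi R A le join meet in
  (* psi maps N(X) into B(Y_A) *)
  (forall f, N f -> bounded_fun (psi f)) /\
  (* injective on N(X) *)
  (forall f g, N f -> N g -> psi f = psi g -> f = g) /\
  (* onto B(Y_A) *)
  (forall h : Ysp le join -> R, bounded_fun h -> exists f, N f /\ psi f = h) /\
  (* ba-l-morphism: preserves +, *, scalars, 1, join, meet of N(X) *)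
  (forall f g, N f -> N g -> psi (nz (f \+ g)) = psi f \+ psi g) /\
  (forall f g, N f -> N g -> psi (nz (f \* g)) = psi f \* psi g) /\
  (forall (r : R) f, N f -> psi (nz (fun x => r * f x)) = (fun y => r * psi f y)) /\
  psi (nz (fun=> 1)) = (fun=> 1) /\
  (forall f g, N f -> N g ->
     psi (nz (fun x => Order.max (f x) (g x))) = (fun y => Order.max (psi f y) (psi g y))) /\
  (forall f g, N f -> N g ->
     psi (nz (fun x => Order.min (f x) (g x))) = (fun y => Order.min (psi f y) (psi g y))).
Proof.
move=> bal; cbv zeta.
pose sub (x y : Xsp le join) := sval x `<=` sval y.
pose Y (x : Xsp le join) := maximal_lideal le join (sval x).
have sub_refl x : sub x x by [].
have sub_trans x y z : sub x y -> sub y z -> sub x z by apply: subset_trans.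
have Y_max m z : Y m -> sub m z -> z = m by apply: maximal_point_eq.
have Y_cof x : exists m, Y m /\ sub x m by exact: (maximal_point_above bal).
have psi_nz f : bounded_fun f ->
    restrict_psi meet (normalize (@alex_open R A le join) f) = restrict_psi meet f.
  exact: (restrY_normalize sub_refl sub_trans Y_max Y_cof).
split; first by move=> f [fb _]; apply: restrY_bounded.
split.
  move=> f g Nf Ng fg; rewrite (normal_maxinf sub_refl sub_trans Y_max Y_cof Nf).
  by rewrite (normal_maxinf sub_refl sub_trans Y_max Y_cof Ng); congr (maxinf sub _).
split.
  move=> h hb; exists (maxinf sub h).
  by split; [apply: maxinf_normal | apply: restrY_maxinf].
split; first by move=> f g [fb _] [gb _]; rewrite psi_nz //; exact: bounded_add.
split; first by move=> f g [fb _] [gb _]; rewrite psi_nz //; exact: (bounded_mul fb gb).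
split; first by move=> r f [fb _]; rewrite psi_nz //; exact: (bounded_mul (bounded_cst _ r) fb).
split; first by rewrite psi_nz //; apply: bounded_cst.
split; first by move=> f g [fb _] [gb _]; rewrite psi_nz //; exact: (bounded_op2 (@normD_max _) fb gb).
by move=> f g [fb _] [gb _]; rewrite psi_nz //; exact: (bounded_op2 (@normD_min _) fb gb).
Qed.
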